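(* Let $\lambda$ be a (straight or skew) shape with $n$ boxes and let $m\in\mathbb N=\{1,2,3,\dots\}$. Then $$\#T[\lambda,m,+]=\#T[\lambda,m,-]=2^{n-1}f^{\lambda},$$ where $f^\lambda$ is the number of standard Young tableaux of shape $\lambda$ (fillings of $\lambda$ by $1,\dots,n$ increasing along rows and down columns).
   Context: Boxes of a diagram are indexed by (row $i$, column $j$), rows numbered downward and columns rightward; the content of the box $(i,j)$ is $j-i$. A D-Young tableau is a filling of a skew diagram by the $2n$ numbers $\pm1,\dots,\pm n$, each number in exactly one box and each box containing one number, except that a box of content $0$ may contain a pair $\pm i$; writing $c_k$ for the content of the box containing $k$, one requires $c_{-k}=-c_k$ for all $k$. It is standard if entries increase from left to right along rows and from top to bottom down columns (a box containing the pair $\pm i$, $i>0$, counts as $-i$ when compared with entries to its left or above and as $i$ when compared with entries to its right or below). A D-Young tableau with no box of content $0$ is regarded as determined by its boxes of positive content together with their entries and contents (i.e. its positive-content part up to translation by multiples of $(1,1)$); the negative part is then forced. For a shape $\lambda$ with $n$ boxes and $m\in\mathbb N$, $T[\lambda,m,+]$ (resp. $T[\lambda,m,-]$) is the set of standard D-Young tableaux whose smallest nonnegative content equals $m$, whose boxes of positive content form the shape $\lambda$, and in which the number of negative entries among the boxes of positive content is even (resp. odd). *)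

From HB Require Import structures.
From mathcomp Require Import all_boot all_order all_algebra.
From mathcomp Require Import finmap.
Set Implicit Arguments. Unset Strict Implicit. Unset Printing Implicit Defensive.
Import Order.TTheory GRing.Theory Num.Theory.
Local Open Scope fset_scope.
Local Open Scope fmap_scope.
Local Open Scope ring_scope.

(* Boxes are pairs (row i, column j) of integers; rows go downward,
   columns rightward.  The content of (i,j) is j - i. *)
Definition box := (int * int)%type.
Definition content (b : box) : int := b.2 - b.1.

Definition is_partition (s : seq nat) : bool :=
  sorted geq s && all (fun x => 0 < x)%N s.

Definition part_contains (la mu : seq nat) : bool :=
  (size mu <= size la)%N &&
  all (fun i => nth 0 mu i <= nth 0 la i)%N (iota 0 (size mu)).

Definition skew_box_seq (la mu : seq nat) : seq box :=
  flatten [seq [seq (Posz i, Posz j)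
                 | j <- iota (nth 0 mu i) (nth 0 la i - nth 0 mu i)]
           | i <- iota 0 (size la)].
Definition skew_boxes (la mu : seq nat) : {fset box} :=
  [fset b | b in skew_box_seq la mu].

Definition translate (d : box) (b : box) : box := (b.1 + d.1, b.2 + d.2).

Definition is_skew_diagram (D : {fset box}) : Prop :=
  exists (la mu : seq nat) (d : box),
    [/\ is_partition la, is_partition mu, part_contains la mu &
        D = [fset translate d b | b in skew_boxes la mu]].

Definition signed_range (n : nat) : seq int :=
  [seq - (Posz k) | k <- iota 1 n] ++ [seq Posz k | k <- iota 1 n].

(* A filling: each box of the diagram (= domain) carries the list of the
   numbers it contains; a pair +-i is stored as [:: -i; i]. *)
Definition filling := {fmap box -> seq int}.
Definition cell (t : filling) (b : box) : seq int := odflt [::] t.[? b].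

Definition is_DYoung (n : nat) (t : filling) : Prop :=
  [/\ is_skew_diagram (domf t),
      (forall k, k \in signed_range n ->
         exists! b, b \in domf t /\ k \in cell t b),
      (forall b k, b \in domf t -> k \in cell t b -> k \in signed_range n),
      (forall b, b \in domf t ->
         (exists k, cell t b = [:: k]) \/
         (content b = 0 /\ exists i : nat, (0 < i)%N /\
                                cell t b = [:: - Posz i; Posz i])) &
      (forall b b' k, b \in domf t -> b' \in domf t ->
         k \in cell t b -> - k \in cell t b' -> content b' = - content b)].

(* Value of a box when compared with entries to its right/below (rval) and
   with entries to its left/above (lval): a pair +-i counts as i resp. -i. *)
Definition rval (s : seq int) : int := last 0 s.
Definition lval (s : seq int) : int := head 0 s.

Definition is_standard (t : filling) : Prop :=
  forall b b', b \in domf t -> b' \in domf t ->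
    ((b.1 = b'.1 /\ b.2 < b'.2) \/ (b.2 = b'.2 /\ b.1 < b'.1)) ->
    rval (cell t b) < lval (cell t b').

Definition smallest_nonneg_content (t : filling) (m : int) : Prop :=
  (exists b, b \in domf t /\ content b = m) /\
  (forall b, b \in domf t -> 0 <= content b -> m <= content b).

Definition neg_count_pos (t : filling) : nat :=
  count (fun b => (0 < content b) && has (fun k => k < 0) (cell t b))
        (enum_fset (domf t)).

Definition pos_part_is (t : filling) (la mu : seq nat)
    (f : {fmap box -> int}) : Prop :=
  exists d : box,
    (forall b, (b \in domf t /\ 0 < content b) <->
               exists2 x, x \in skew_boxes la mu & b = translate d x) /\
    (forall x, x \in skew_boxes la mu ->
               cell t (translate d x) = [:: odflt 0 f.[? x]]).

(* T[la/mu, m, +] (even = true) and T[la/mu, m, -] (even = false): a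
   D-Young tableau without content-0 box is identified with its
   positive-content part up to translation, i.e. with the filling f of
   la/mu it induces. *)
Definition T_set (n : nat) (la mu : seq nat) (m : nat) (even : bool)
    (f : {fmap box -> int}) : Prop :=
  domf f = skew_boxes la mu /\
  exists t : filling,
    [/\ is_DYoung n t, is_standard t, smallest_nonneg_content t (Posz m),
        pos_part_is t la mu f & ~~ odd (neg_count_pos t) = even].

Definition is_SYT (n : nat) (la mu : seq nat) (g : {fmap box -> nat}) : Prop :=
  [/\ domf g = skew_boxes la mu,
      (forall x, x \in domf g -> (1 <= odflt 0%N g.[? x] <= n)%N),
      (forall x y, x \in domf g -> y \in domf g ->
         g.[? x] = g.[? y] -> x = y) &
      (forall x y, x \in domf g -> y \in domf g ->
         ((x.1 = y.1 /\ x.2 < y.2) \/ (x.2 = y.2 /\ x.1 < y.1)) ->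
         (odflt 0%N g.[? x] < odflt 0%N g.[? y])%N)].

Definition card_is {T : eqType} (P : T -> Prop) (k : nat) : Prop :=
  exists s : seq T, [/\ uniq s, (forall x, P x <-> x \in s) & size s = k].

From HB Require Import structures.
From mathcomp Require Import all_boot all_order all_algebra.
From mathcomp Require Import finmap zify.
Set Implicit Arguments. Unset Strict Implicit. Unset Printing Implicit Defensive.
Import Order.TTheory GRing.Theory Num.Theory.
Local Open Scope fset_scope.
Local Open Scope fmap_scope.
Local Open Scope ring_scope.

(* Since m > 0, a tableau of T[la/mu, m, +-] has no box of content 0, and its
   positive part is a filling f of D = la/mu whose absolute values are 1, ..., n
   (each once) and which increases along rows and columns.  Conversely every such
   f is the positive part of a tableau: put D where its smallest content is m and
   add below it the half-turn rotation of D filled with -f; the two copies form a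
   skew diagram.  Now f is determined by the set e of k such that -k is an entry
   and by the standard Young tableau g recording the rank of each entry, since
   for fixed e the n possible values +-k are totally ordered.  The number of
   negative entries is #|e|, and exactly half of the 2^n sets e have each
   parity. *)

Lemma count_enum_card (T : finType) (p : pred T) : count p (enum T) = #|p|.
Proof. by rewrite cardE -size_filter /enum_mem filter_predT. Qed.

Lemma count_enum_fset (K : choiceType) (A : {fset K}) (p : pred K) :
  count p (enum_fset A) = #|[pred x : A | p (val x)]|.
Proof. by rewrite enum_fsetE count_map -count_enum_card. Qed.

Lemma fnd_fmap_val (K : choiceType) (V : Type) (A : {fset K}) (h : A -> V) (y : A) :
  ([fmap x : A => h x] : {fmap K -> V}).[? val y] = Some (h y).
Proof. by rewrite /fnd /= valK /= ffunE. Qed.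

Lemma fnd_fmap_in (K : choiceType) (V : Type) (A : {fset K}) (h : A -> V) (k : K)
    (kA : k \in A) :
  ([fmap x : A => h x] : {fmap K -> V}).[? k] = Some (h [` kA]).
Proof. exact: (fnd_fmap_val h [` kA]). Qed.

Lemma fnd_fmap (K : choiceType) (V : Type) (A : {fset K}) (h : K -> V) (k : K) :
  ([fmap x : A => h (val x)] : {fmap K -> V}).[? k] =
  if k \in A then Some (h k) else None.
Proof. by case: fndP => [kA|kNA] //=; rewrite ffunE. Qed.

Lemma fnd_odflt (K : choiceType) (V : Type) (g : {fmap K -> V}) (d : V) (x : K) :
  x \in domf g -> g.[? x] = Some (odflt d g.[? x]).
Proof. by case: fndP. Qed.

Lemma fmap_eq_on (K : choiceType) (V : Type) (A : {fset K}) (f g : {fmap K -> V}) :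
  domf f = A -> domf g = A -> {in A, forall k, f.[? k] = g.[? k]} -> f = g.
Proof.
move=> fA gA fg; apply/fmapP => k; case: (boolP (k \in A)) => kA; first exact: fg.
have kf : k \notin domf f by rewrite fA.
have kg : k \notin domf g by rewrite gA.
by rewrite !not_fnd.
Qed.

Lemma mem_signed_range n (k : int) :
  (k \in signed_range n) = (k != 0) && (`|k| <= n)%N.
Proof.
rewrite /signed_range mem_cat; apply/orP/andP.
- case=> /mapP[j]; rewrite mem_iota add1n ltnS => /andP[j1 jn] ->;
    by case: j j1 jn.
- case: k => k [k0 kn].
  + right; apply/mapP; exists k => //; rewrite mem_iota add1n ltnS kn andbT.
    by rewrite lt0n; apply: contra k0 => /eqP->.
  + left; apply/mapP; exists k.+1; first by rewrite mem_iota add1n ltnS.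
    by rewrite NegzE.
Qed.

Lemma signed_rangeN n k : (- k \in signed_range n) = (k \in signed_range n).
Proof. by rewrite !mem_signed_range oppr_eq0 abszN. Qed.

Definition box_before (x y : box) : bool :=
  ((x.1 == y.1) && (x.2 < y.2)) || ((x.2 == y.2) && (x.1 < y.1)).

Lemma box_beforeP x y :
  reflect ((x.1 = y.1 /\ x.2 < y.2) \/ (x.2 = y.2 /\ x.1 < y.1)) (box_before x y).
Proof.
by apply: (iffP orP) => [[/andP[/eqP ? ?]|/andP[/eqP ? ?]]|[[-> ?]|[-> ?]]];
  rewrite ?eqxx; [left|right|left|right].
Qed.

Lemma translate_inj d : injective (translate d).
Proof. by move=> [a b] [c e] [] h1 h2; congr (_, _); lia. Qed.

Lemma mem_skew_boxesP la mu (x : box) :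
  reflect (exists i j : nat,
             x = (Posz i, Posz j) /\ (nth 0 mu i <= j < nth 0 la i)%N)
          (x \in skew_boxes la mu).
Proof.
rewrite /skew_boxes in_fset /skew_box_seq; change (0%R : nat) with 0%N.
apply: (iffP flattenP) => [[s /mapP[i _ ->] /mapP[j]]|[i [j [-> /andP[mj jl]]]]].
  rewrite mem_iota => /andP[mj jl] ->; exists i, j; split=> //.
  by move: (nth 0 mu i) (nth 0 la i) (j : nat) mj jl => a b c; lia.
have il : (i < size la)%N.
  by rewrite ltnNge; apply/negP => /(nth_default 0%N) la0; rewrite la0 in jl.
exists [seq (Posz i, Posz j0) | j0 <- iota (nth 0 mu i) (nth 0 la i - nth 0 mu i)].
  by apply/mapP; exists i; rewrite // mem_iota add0n.
apply/mapP; exists j => //; rewrite mem_iota mj /=.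
by move: (nth 0 mu i) (nth 0 la i) mj jl => a b; lia.
Qed.

Lemma partition_nth_le (s : seq nat) i j : is_partition s -> (i <= j)%N ->
  (nth 0 s j <= nth 0 s i)%N.
Proof.
case/andP=> ss _ ij; case: (ltnP j (size s)) => js; last by rewrite nth_default.
have geq_trans : transitive geq by move=> a b c /= ab bc; apply: leq_trans bc ab.
by apply: (sorted_leq_nth geq_trans leqnn 0%N ss) => //; rewrite inE; lia.
Qed.

Lemma part_contains_nth la mu i : part_contains la mu -> (nth 0 mu i <= nth 0 la i)%N.
Proof.
case/andP=> _ /allP mu_la; case: (ltnP i (size mu)) => im; last by rewrite nth_default.
by apply: mu_la; rewrite mem_iota add0n im.
Qed.

(** * Signed entries *)

(* The index k : 'I_n stands for the number k + 1, and ranks r count from 0. *)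
Section SignedEntries.
Variable n : nat.
Implicit Types (e : {set 'I_n}) (v : int).

Definition signed_entry e (k : 'I_n) : int :=
  if k \in e then - Posz k.+1 else Posz k.+1.
Definition signed_entries e : seq int := [seq signed_entry e k | k <- enum 'I_n].
Definition sorted_entries e := sort <=%O (signed_entries e).
Definition kth_entry e (r : nat) : int := nth 0 (sorted_entries e) r.
Definition entry_rank e v : nat := index v (sorted_entries e).

Lemma abs_signed_entry e k : `|signed_entry e k|%N = k.+1.
Proof. by rewrite /signed_entry; case: ifP; rewrite ?abszN. Qed.

Lemma signed_entry_inj e : injective (signed_entry e).
Proof. by move=> k k' /(congr1 absz); rewrite !abs_signed_entry => -[] /val_inj. Qed.

Lemma signed_entries_uniq e : uniq (signed_entries e).
Proof. by rewrite map_inj_uniq ?enum_uniq //; apply: signed_entry_inj. Qed.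

Lemma size_sorted_entries e : size (sorted_entries e) = n.
Proof. by rewrite size_sort size_map size_enum_ord. Qed.

Lemma mem_sorted_entries e v : (v \in sorted_entries e) = (v \in signed_entries e).
Proof. exact: mem_sort. Qed.

Lemma signed_entriesP e v :
  reflect (exists k, v = signed_entry e k) (v \in signed_entries e).
Proof.
by apply: (iffP mapP) => [[k _ ->]|[k ->]]; exists k; rewrite ?mem_enum.
Qed.

Lemma signed_entry_mem e k : signed_entry e k \in signed_entries e.
Proof. by apply/signed_entriesP; exists k. Qed.

Lemma neg_signed_entries e (k : 'I_n) : (- Posz k.+1 \in signed_entries e) = (k \in e).
Proof.
apply/signed_entriesP/idP => [[k']|ke]; last by exists k; rewrite /signed_entry ke.
rewrite /signed_entry; case: ifP => [_ /oppr_inj [] /val_inj -> //|_].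
by move/(congr1 (fun z : int => z < 0)); rewrite oppr_lt0.
Qed.

Lemma pos_signed_entries e (k : 'I_n) : (Posz k.+1 \in signed_entries e) = (k \notin e).
Proof.
apply/signed_entriesP/idP => [[k']|ke]; last first.
  by exists k; rewrite /signed_entry (negPf ke).
rewrite /signed_entry; case: ifP => [_|k'e [] /val_inj ->]; last by rewrite k'e.
by move/(congr1 (fun z : int => 0 < z)); rewrite oppr_gt0.
Qed.

Lemma signed_entries_range e v : v \in signed_entries e -> v \in signed_range n.
Proof.
case/signed_entriesP => k ->; rewrite mem_signed_range abs_signed_entry ltn_ord andbT.
by rewrite -absz_eq0 abs_signed_entry.
Qed.

Lemma kth_entry_mem e r : (r < n)%N -> kth_entry e r \in signed_entries e.
Proof. by move=> rn; rewrite -mem_sorted_entries mem_nth ?size_sorted_entries. Qed.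

Lemma kth_entry_ltE e r r' : (r < n)%N -> (r' < n)%N ->
  (kth_entry e r < kth_entry e r') = (r < r')%N.
Proof.
move=> rn r'n; apply: lt_sorted_ltn_nth; rewrite ?inE ?size_sorted_entries //.
by rewrite sort_lt_sorted signed_entries_uniq.
Qed.

Lemma kth_entry_inj e r r' : (r < n)%N -> (r' < n)%N ->
  kth_entry e r = kth_entry e r' -> r = r'.
Proof.
move=> rn r'n E; apply/eqP; rewrite eqn_leq.
by apply/andP; split; rewrite leqNgt -(kth_entry_ltE e) // E ltxx.
Qed.

Lemma entry_rank_lt e v : v \in signed_entries e -> (entry_rank e v < n)%N.
Proof. by rewrite -mem_sorted_entries -index_mem size_sorted_entries. Qed.

Lemma entry_rankK e v : v \in signed_entries e -> kth_entry e (entry_rank e v) = v.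
Proof. by rewrite -mem_sorted_entries; apply: nth_index. Qed.

Lemma card_neg_kth_entry e : #|[pred r : 'I_n | kth_entry e r < 0]| = #|e|.
Proof.
have -> : #|e| = count (fun v : int => v < 0) (sorted_entries e).
  rewrite /sorted_entries (permP (permEl (perm_sort _ _))) count_map -count_enum_card.
  apply: eq_count => k /=.
  by rewrite /signed_entry; case: ifP => ke; rewrite ?oppr_lt0 ?ke.
rewrite -count_enum_card -(mkseq_nth 0 (sorted_entries e)) size_sorted_entries.
by rewrite /mkseq -val_enum_ord -map_comp [RHS]count_map; apply: eq_count.
Qed.

End SignedEntries.

(** * Extending a filling to a D-Young tableau *)

Section DoubledTableau.
Variables (la mu : seq nat) (m r0 : nat).
Hypotheses (la_part : is_partition la) (mu_part : is_partition mu)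
           (la_mu : part_contains la mu) (m_gt0 : (0 < m)%N).
Local Notation D := (skew_boxes la mu).
Hypotheses (r0_nonempty : (nth 0 mu r0 < nth 0 la r0)%N)
           (r0_last : forall x, x \in D -> x.1 <= Posz r0).
Local Notation c0 := (nth 0%N mu r0).
Local Notation width := (nth 0%N la 0).

Definition content_shift : int := Posz m - Posz c0 + Posz r0.
Local Notation shift := content_shift.

Definition upper_box (x : box) : box := translate (0, shift) x.
Definition lower_box (x : box) : box :=
  (Posz (2 * r0 + 1) - x.1, Posz (2 * r0 + 1) - shift - x.2).

(* The upper copy of D has smallest content m, at the box (r0, c0); the lower
   copy is its half-turn rotation, with contents negated.  Up to a horizontal
   translation they are the skew shape stacked la mu / stacked mu la: row
   k <= r0 is row k of D pushed right by col_offset, and row 2 r0 + 1 - i is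
   row i of D reflected by j |-> mirror_col - j. *)
Definition col_offset : nat := (width + 2 * m)%N.
Definition mirror_col : nat := (width + 2 * c0 + 1)%N.

Definition stacked (a b : seq nat) : seq nat :=
  mkseq (fun k => if (k <= r0)%N then (nth 0 a k + col_offset)%N
                  else (mirror_col.+1 - nth 0 b (2 * r0 + 1 - k))%N) (2 * r0 + 2).
Definition doubled_diagram : {fset box} :=
  [fset translate (0, shift - Posz col_offset) b
     | b in skew_boxes (stacked la mu) (stacked mu la)].

Lemma width_ge i : (nth 0 la i <= width)%N.
Proof. exact: partition_nth_le. Qed.

Lemma mirror_col_ge_la i : (nth 0 la i <= mirror_col)%N.
Proof. by have := width_ge i; rewrite /mirror_col; lia. Qed.

Lemma mirror_col_ge_mu i : (nth 0 mu i <= mirror_col)%N.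
Proof. exact: leq_trans (part_contains_nth i la_mu) (mirror_col_ge_la i). Qed.

Lemma D_bounds x : x \in D -> exists i j : nat, x = (Posz i, Posz j) /\
  [/\ (i <= r0)%N, (nth 0 mu i <= j < nth 0 la i)%N & (c0 <= j < width)%N].
Proof.
move=> xD; have := r0_last xD; case/mem_skew_boxesP: xD => i [j [-> /andP[mj jl]]].
rewrite lez_nat => ir; exists i, j; split=> //; split; rewrite ?mj ?jl //.
by rewrite (leq_trans (partition_nth_le mu_part ir) mj) (leq_trans jl (width_ge i)).
Qed.

Lemma r0_box : (Posz r0, Posz c0) \in D.
Proof. by apply/mem_skew_boxesP; exists r0, c0; rewrite leqnn r0_nonempty. Qed.

Lemma nth_stacked a b k : (k < 2 * r0 + 2)%N -> nth 0 (stacked a b) k =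
  if (k <= r0)%N then (nth 0 a k + col_offset)%N
  else (mirror_col.+1 - nth 0 b (2 * r0 + 1 - k))%N.
Proof. by move=> kr; rewrite nth_mkseq. Qed.

Lemma stacked_partition a b : is_partition a -> is_partition b ->
  (forall i, nth 0 b i <= mirror_col)%N ->
  (mirror_col < nth 0 a r0 + nth 0 b r0 + col_offset)%N ->
  is_partition (stacked a b).
Proof.
move=> a_part b_part b_le junction; apply/andP; split.
  apply/(sortedP 0%N) => k; rewrite size_mkseq => kr.
  rewrite !nth_stacked /=; try lia.
  case: ifP => k1r; case: ifP => kr0; try lia.
  - by rewrite leq_add2r partition_nth_le.
  - have -> : k = r0 by lia.
    have -> : (2 * r0 + 1 - r0.+1 = r0)%N by lia.
    lia.
  - by have := @partition_nth_le b (2 * r0 + 1 - k.+1) (2 * r0 + 1 - k) b_part; lia.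
apply/allP => v /mapP [k]; rewrite mem_iota add0n => kr ->.
by case: ifP => _; [rewrite /col_offset | have := b_le (2 * r0 + 1 - k)%N]; lia.
Qed.

Lemma junction_lt : (mirror_col < nth 0 la r0 + c0 + col_offset)%N.
Proof. by rewrite /mirror_col /col_offset; lia. Qed.

Lemma stacked_contains : part_contains (stacked la mu) (stacked mu la).
Proof.
apply/andP; split; first by rewrite !size_mkseq.
apply/allP => k; rewrite mem_iota add0n size_mkseq => kr.
rewrite !nth_stacked //.
have := part_contains_nth k la_mu; have := part_contains_nth (2 * r0 + 1 - k) la_mu.
by have := mirror_col_ge_la (2 * r0 + 1 - k); case: ifP; lia.
Qed.

Lemma doubled_diagram_skew : is_skew_diagram doubled_diagram.
Proof.
exists (stacked la mu), (stacked mu la), (0, shift - Posz col_offset).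
split=> //; last exact: stacked_contains.
  by apply: stacked_partition => //; [apply: mirror_col_ge_mu | apply: junction_lt].
by apply: stacked_partition => //; [apply: mirror_col_ge_la | have := junction_lt; lia].
Qed.

Lemma upper_box_doubled x : x \in D -> upper_box x \in doubled_diagram.
Proof.
case/D_bounds => i [j [-> [ir /andP[mj jl] _]]].
apply/imfsetP; exists (Posz i, Posz (j + col_offset)) => /=.
  apply/mem_skew_boxesP; exists i, (j + col_offset)%N; split=> //.
  by rewrite !nth_stacked ?ir ?leq_add2r ?ltn_add2r ?mj ?jl //; lia.
by rewrite /upper_box /translate /=; congr (_, _); lia.
Qed.

Lemma lower_box_doubled x : x \in D -> lower_box x \in doubled_diagram.
Proof.
case/D_bounds => i [j [-> [ir /andP[mj jl] /andP[_ jw]]]].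
apply/imfsetP; exists (Posz (2 * r0 + 1 - i), Posz (mirror_col - j)) => /=.
  apply/mem_skew_boxesP; exists (2 * r0 + 1 - i)%N, (mirror_col - j)%N; split=> //.
  have ifalse : (2 * r0 + 1 - i <= r0)%N = false by apply/negbTE; lia.
  rewrite !nth_stacked ?ifalse; try lia.
  have -> : (2 * r0 + 1 - (2 * r0 + 1 - i) = i)%N by lia.
  by have := mirror_col_ge_la i; lia.
rewrite /lower_box /translate /content_shift /col_offset /mirror_col /=.
by congr (_, _); lia.
Qed.

Lemma doubled_diagramP b : b \in doubled_diagram ->
  exists2 x, x \in D & b = upper_box x \/ b = lower_box x.
Proof.
case/imfsetP => /= b0 /mem_skew_boxesP [k [J [-> /andP[mJ Jl]]]] ->.
have : (k < size (stacked la mu))%N.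
  by rewrite ltnNge; apply/negP => /(nth_default 0%N) E; rewrite E in Jl.
rewrite size_mkseq => kr.
rewrite nth_stacked // in Jl; rewrite nth_stacked // in mJ.
case: ifP mJ Jl => kr0 mJ Jl.
  exists (Posz k, Posz (J - col_offset)).
    by apply/mem_skew_boxesP; exists k, (J - col_offset)%N; split=> //; lia.
  by left; rewrite /upper_box /translate /=; congr (_, _); lia.
have la_mirror := mirror_col_ge_la (2 * r0 + 1 - k).
have mu_la := part_contains_nth (2 * r0 + 1 - k) la_mu.
exists (Posz (2 * r0 + 1 - k), Posz (mirror_col - J)).
  apply/mem_skew_boxesP; exists (2 * r0 + 1 - k)%N, (mirror_col - J)%N; split=> //.
  by move: mJ Jl; lia.
right; rewrite /lower_box /translate /content_shift /col_offset /=; congr (_, _).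
  lia.
by move: mJ Jl la_mirror; rewrite /mirror_col; lia.
Qed.

Lemma content_upper_box x : content (upper_box x) = content x + shift.
Proof. by rewrite /content /upper_box /translate /=; lia. Qed.

Lemma content_lower_box x : content (lower_box x) = - (content x + shift).
Proof. by rewrite /content /lower_box /=; lia. Qed.

Lemma shifted_content_ge x : x \in D -> Posz m <= content x + shift.
Proof.
case/D_bounds => i [j [-> [ir _ /andP[cj _]]]].
by rewrite /content /content_shift /=; lia.
Qed.

Variables (n : nat) (f : {fmap box -> int}).
Local Notation F x := (odflt 0 f.[? x]).
Hypotheses (f_range : forall x, x \in D -> F x \in signed_range n)
  (f_abs_inj : forall x y, x \in D -> y \in D -> `|F x|%N = `|F y|%N -> x = y)
  (f_increasing : forall x y, x \in D -> y \in D -> box_before x y -> F x < F y)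
  (f_covers : forall k, k \in signed_range n ->
                exists2 x, x \in D & F x = k \/ F x = - k).

Definition doubled_cell (b : box) : seq int :=
  if b.1 <= Posz r0 then [:: F (b.1, b.2 - shift)]
  else [:: - F (Posz (2 * r0 + 1) - b.1, Posz (2 * r0 + 1) - shift - b.2)].
Definition doubled_tableau : filling :=
  [fmap b : doubled_diagram => doubled_cell (val b)].
Local Notation T := doubled_tableau.

Lemma cell_upper_box x : x \in D -> cell T (upper_box x) = [:: F x].
Proof.
move=> xD; rewrite /cell fnd_fmap upper_box_doubled //= /doubled_cell.
case/D_bounds: xD => i [j [-> [ir _ _]]] /=.
by rewrite ifT; [congr [:: F (_, _)]; lia | lia].
Qed.

Lemma cell_lower_box x : x \in D -> cell T (lower_box x) = [:: - F x].
Proof.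
move=> xD; rewrite /cell fnd_fmap lower_box_doubled //= /doubled_cell.
case/D_bounds: xD => i [j [-> [ir _ _]]] /=.
by rewrite ifF; [congr [:: - F (_, _)]; lia | apply/negbTE; lia].
Qed.

Lemma doubled_tableau_cases b : b \in domf T -> exists2 x, x \in D &
  (b = upper_box x /\ cell T b = [:: F x]) \/
  (b = lower_box x /\ cell T b = [:: - F x]).
Proof.
case/doubled_diagramP => x xD [->|->]; exists x => //.
  by left; rewrite cell_upper_box.
by right; rewrite cell_lower_box.
Qed.

Lemma entry_neq0 x : x \in D -> F x != 0.
Proof. by move/f_range; rewrite mem_signed_range => /andP[]. Qed.

Lemma doubled_entry_unique k : k \in signed_range n ->
  exists! b, b \in domf T /\ k \in cell T b.
Proof.
move=> kS; have [x xD Fx] := f_covers kS.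
pose b := if F x == k then upper_box x else lower_box x.
have bk : b \in domf T /\ k \in cell T b.
  rewrite /b; case: eqP Fx => [Fxk _|_ [//|Fxk]].
    by rewrite upper_box_doubled // cell_upper_box // Fxk inE.
  by rewrite lower_box_doubled // cell_lower_box // Fxk opprK inE.
have absFx : `|F x|%N = `|k|%N by case: Fx => ->; rewrite ?abszN.
have b_uniq b' : b' \in domf T -> k \in cell T b' -> b' = b.
  case/doubled_tableau_cases => y yD [[-> ->]|[-> ->]]; rewrite inE => /eqP ky.
    have yx : y = x by apply: f_abs_inj; rewrite // absFx ky.
    by rewrite /b -yx -ky eqxx.
  have yx : y = x by apply: f_abs_inj; rewrite // absFx ky abszN.
  rewrite /b -yx ifF //; apply/eqP => Fyk.
  by have := entry_neq0 yD; lia.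
by exists b; split=> // b' [b'T kb']; rewrite (b_uniq b').
Qed.

Lemma doubled_tableau_opp b b' k : b \in domf T -> b' \in domf T ->
  k \in cell T b -> - k \in cell T b' -> content b' = - content b.
Proof.
move=> /doubled_tableau_cases [x xD Hx] /doubled_tableau_cases [y yD Hy].
have [[-> ->]|[-> ->]] := Hx; have [[-> ->]|[-> ->]] := Hy;
  rewrite !inE => /eqP kx /eqP ky.
all: have yx : y = x by apply: f_abs_inj => //; lia.
all: subst y; rewrite ?content_upper_box ?content_lower_box ?opprK //.
all: by have := entry_neq0 xD; lia.
Qed.

Lemma doubled_tableau_DYoung : is_DYoung n T.
Proof.
split.
- exact: doubled_diagram_skew.
- exact: doubled_entry_unique.
- move=> b k /doubled_tableau_cases [x xD [[_ ->]|[_ ->]]]; rewrite inE => /eqP ->;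
    by rewrite ?signed_rangeN f_range.
- by move=> b /doubled_tableau_cases [x xD [[_ ->]|[_ ->]]]; left; eexists.
- exact: doubled_tableau_opp.
Qed.

Lemma doubled_tableau_standard : is_standard T.
Proof.
move=> b b' /doubled_tableau_cases [x xD Hx] /doubled_tableau_cases [y yD Hy].
have [i [j [Ex [ir _ /andP[cj _]]]]] := D_bounds xD.
have [i' [j' [Ey [ir' _ /andP[cj' _]]]]] := D_bounds yD.
have [[-> ->]|[-> ->]] := Hx; have [[-> ->]|[-> ->]] := Hy;
  rewrite /rval /lval => /= before;
  rewrite /upper_box /lower_box /translate Ex Ey /= in before.
- by apply: f_increasing => //; apply/box_beforeP; rewrite Ex Ey /=; lia.
- by exfalso; move: before; rewrite /content_shift; lia.
- by exfalso; move: before; rewrite /content_shift; lia.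
- by rewrite ltrN2; apply: f_increasing => //; apply/box_beforeP; rewrite Ex Ey /=; lia.
Qed.

Lemma doubled_tableau_smallest : smallest_nonneg_content T (Posz m).
Proof.
split.
  exists (upper_box (Posz r0, Posz c0)); rewrite upper_box_doubled ?r0_box //.
  by rewrite content_upper_box /content /content_shift /=; split=> //; lia.
move=> b /doubled_tableau_cases [x xD [[-> _]|[-> _]]];
  rewrite ?content_upper_box ?content_lower_box; have := shifted_content_ge xD; lia.
Qed.

Lemma doubled_tableau_pos_part : pos_part_is T la mu f.
Proof.
exists (0, shift); split=> [b|x xD]; last exact: cell_upper_box.
split.
  case=> /doubled_tableau_cases [x xD [[-> _]|[-> _]]]; first by exists x.
  by rewrite content_lower_box; have := shifted_content_ge xD; lia.
case=> x xD ->; split; first exact: upper_box_doubled.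
by rewrite -/(upper_box x) content_upper_box; have := shifted_content_ge xD; lia.
Qed.

End DoubledTableau.

(** * The positive part of a D-Young tableau *)

Lemma neg_count_pos_part (t : filling) la mu (f : {fmap box -> int}) :
  pos_part_is t la mu f -> neg_count_pos t =
  count (fun x => odflt 0 f.[? x] < 0) (enum_fset (skew_boxes la mu)).
Proof.
case=> d [pos_boxes pos_cells]; rewrite /neg_count_pos -!size_filter.
rewrite -[RHS](size_map (translate d)); apply/perm_size/uniq_perm.
- by apply: filter_uniq; apply: fset_uniq.
- by rewrite map_inj_uniq ?filter_uniq ?fset_uniq //; apply: translate_inj.
move=> b; rewrite mem_filter; apply/andP/mapP.
  case=> /andP[cb hb] bt; have [x xD Eb] := (pos_boxes b).1 (conj bt cb).
  exists x => //; rewrite mem_filter xD andbT.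
  by move: hb; rewrite Eb pos_cells //= orbF.
case=> x; rewrite mem_filter => /andP[fx xD] ->.
have [bt cb] := (pos_boxes (translate d x)).2 (ex_intro2 _ _ x xD erefl).
by rewrite cb pos_cells //= orbF fx.
Qed.

Section PositivePart.
Variables (n : nat) (la mu : seq nat) (f : {fmap box -> int}) (t : filling).
Hypotheses (t_DYoung : is_DYoung n t) (t_pos : pos_part_is t la mu f).
Local Notation D := (skew_boxes la mu).
Local Notation F x := (odflt 0 f.[? x]).

Lemma pos_part_cells : exists d : box,
  (forall x, x \in D -> translate d x \in domf t /\ 0 < content (translate d x)) /\
  (forall x, x \in D -> cell t (translate d x) = [:: F x]).
Proof.
case: t_pos => d [pos_boxes pos_cells]; exists d; split=> // x xD.
by apply/(pos_boxes (translate d x)); exists x.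
Qed.

Lemma pos_part_range x : x \in D -> F x \in signed_range n.
Proof.
case: pos_part_cells => d [in_t cells] xD; case: t_DYoung => _ _ t_range _ _.
by apply: (t_range (translate d x)); [case: (in_t x xD) | rewrite cells // inE].
Qed.

Lemma pos_part_inj x y : x \in D -> y \in D -> F x = F y -> x = y.
Proof.
case: pos_part_cells => d [in_t cells] xD yD Fxy; case: t_DYoung => _ t_uniq _ _ _.
have [b [_ b_uniq]] := t_uniq _ (pos_part_range xD).
have bx : b = translate d x.
  by apply: b_uniq; rewrite cells // inE; split=> //; case: (in_t x xD).
have by_ : b = translate d y.
  by apply: b_uniq; rewrite cells // inE Fxy; split=> //; case: (in_t y yD).
by apply: (@translate_inj d); rewrite -bx -by_.
Qed.

Lemma pos_part_not_opp x y : x \in D -> y \in D -> F x <> - F y.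
Proof.
case: pos_part_cells => d [in_t cells] xD yD Fxy; case: t_DYoung => _ _ _ _ t_opp.
have := t_opp (translate d y) (translate d x) (F y) (in_t y yD).1 (in_t x xD).1.
rewrite !cells // !inE Fxy !eqxx => /(_ isT isT) Ec.
by have := (in_t x xD).2; have := (in_t y yD).2; rewrite Ec; lia.
Qed.

Lemma pos_part_increasing x y : is_standard t -> x \in D -> y \in D ->
  box_before x y -> F x < F y.
Proof.
case: pos_part_cells => d [in_t cells] t_std xD yD /box_beforeP xy.
have := t_std _ _ (in_t x xD).1 (in_t y yD).1; rewrite !cells //; apply.
by move: xy; rewrite /translate /=; lia.
Qed.

End PositivePart.

(** * Counting *)

Lemma card_is_image (aT : finType) (rT : eqType) (A : {set aT}) (h : aT -> rT)
    (P : rT -> Prop) :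
  {in A &, injective h} -> (forall y, P y <-> exists2 x, x \in A & h x = y) ->
  card_is P #|A|.
Proof.
move=> h_inj PA; exists (map h (enum A)); split.
- by rewrite map_inj_in_uniq ?enum_uniq // => x y; rewrite !mem_enum; apply: h_inj.
- move=> y; rewrite PA; split=> [[x xA <-]|/mapP[x xA ->]].
    by apply: map_f; rewrite mem_enum.
  by exists x; rewrite // -mem_enum.
- by rewrite size_map cardE.
Qed.

Lemma exists_last_row la mu : (0 < #|` skew_boxes la mu|)%N ->
  exists r : nat, (nth 0 mu r < nth 0 la r)%N /\
    forall x, x \in skew_boxes la mu -> x.1 <= Posz r.
Proof.
rewrite cardfE => /card_gt0P [x0 _].
have [y _ y_max] :=
  @arg_maxnP _ x0 predT (fun y : skew_boxes la mu => `|(val y).1|%N) isT.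
case/mem_skew_boxesP: (fsvalP y) => i [j [yij /andP[mj jl]]].
exists i; split; first exact: leq_ltn_trans mj jl.
move=> x xD; have := y_max [` xD] isT; rewrite /= yij /=.
by case/mem_skew_boxesP: xD => i' [j' [-> _]]; rewrite /= lez_nat.
Qed.

Section Counting.
Variables (la mu : seq nat) (n' m : nat).
Local Notation n := n'.+1.
Local Notation D := (skew_boxes la mu).
Hypothesis card_D : #|` D| = n.

Definition standard_numbering (g : {ffun D -> 'I_n}) : bool :=
  injectiveb g &&
  [forall x : D, forall y : D, box_before (val x) (val y) ==> (g x < g y)%N].

Lemma standard_numbering_inj g : standard_numbering g -> injective g.
Proof. by case/andP => /injectiveP. Qed.

Lemma standard_numbering_lt g (x y : D) : standard_numbering g ->
  box_before (val x) (val y) -> (g x < g y)%N.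
Proof. by case/andP => _ /forallP /(_ x) /forallP /(_ y) /implyP. Qed.

Lemma standard_numbering_onto g r : standard_numbering g -> exists x, g x = r.
Proof.
move=> g_std; have := inj_card_onto (standard_numbering_inj g_std) _ r.
rewrite card_ord -cardfE card_D leqnn => /(_ isT) /codomP [x ->]; by exists x.
Qed.

Lemma standard_numberingP (g : {ffun D -> 'I_n}) :
  injective g -> (forall x y : D, box_before (val x) (val y) -> (g x < g y)%N) ->
  standard_numbering g.
Proof.
move=> g_inj g_lt; apply/andP; split; first exact/injectiveP.
by apply/forallP => x; apply/forallP => y; apply/implyP; apply: g_lt.
Qed.

Definition standard_numberings := [set g | standard_numbering g].

Definition syt_of_numbering (g : {ffun D -> 'I_n}) : {fmap box -> nat} :=
  [fmap x : D => (g x).+1].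

Lemma syt_of_numberingP g : standard_numbering g -> is_SYT n la mu (syt_of_numbering g).
Proof.
move=> g_std; split=> //.
- by move=> x xD; rewrite fnd_fmap_in /= ltn_ord.
- move=> x y xD yD; rewrite !fnd_fmap_in => -[] /val_inj.
  by move=> /(standard_numbering_inj g_std) /(congr1 val).
- move=> x y xD yD /box_beforeP xy; rewrite !fnd_fmap_in /= ltnS.
  exact: standard_numbering_lt.
Qed.

Lemma numbering_of_SYT h : is_SYT n la mu h ->
  exists2 g, standard_numbering g & syt_of_numbering g = h.
Proof.
case=> dom_h h_range h_inj h_lt.
have inD (x : D) : val x \in domf h by rewrite dom_h fsvalP.
pose v x := odflt 0%N h.[? x].
have v_range (x : D) : (0 < v (val x) <= n)%N by apply: h_range (inD x).
have vE (x : D) : nat_of_ord (inord (v (val x)).-1 : 'I_n) = (v (val x)).-1.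
  by rewrite inordK //; have := v_range x; lia.
exists [ffun x : D => inord (v (val x)).-1].
  apply: standard_numberingP => [x y|x y /box_beforeP xy]; rewrite !ffunE.
    move=> /(congr1 val); rewrite /= !vE => Exy; apply/val_inj/h_inj => //.
    rewrite (fnd_odflt 0%N (inD x)) (fnd_odflt 0%N (inD y)) -/(v _) -/(v _).
    by congr Some; have := v_range x; have := v_range y; lia.
  have := h_lt _ _ (inD x) (inD y) xy; rewrite -/(v _) -/(v _) !vE.
  by have := v_range x; lia.
apply: (fmap_eq_on (A := D)) => // x xD.
have xh : x \in domf h by rewrite dom_h.
rewrite fnd_fmap_in ffunE (fnd_odflt 0%N xh).
by congr Some; rewrite vE /=; have := v_range [` xD]; rewrite /v /=; lia.
Qed.

Lemma syt_of_numbering_inj : injective syt_of_numbering.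
Proof.
move=> g1 g2 E; apply/ffunP => x; apply: ord_inj.
have : (syt_of_numbering g1).[? val x] = (syt_of_numbering g2).[? val x] by rewrite E.
by rewrite !fnd_fmap_val => -[].
Qed.

Lemma card_SYT : card_is (is_SYT n la mu) #|standard_numberings|.
Proof.
apply: card_is_image => [g1 g2 _ _|h]; first exact: syt_of_numbering_inj.
split=> [/numbering_of_SYT [g g_std <-]|[g]]; first by exists g; rewrite ?inE.
by rewrite inE => g_std <-; apply: syt_of_numberingP.
Qed.

Definition signed_filling (q : {set 'I_n} * {ffun D -> 'I_n}) : {fmap box -> int} :=
  [fmap x : D => kth_entry q.1 (q.2 x)].

Definition signed_pairs (even : bool) :=
  [set q : {set 'I_n} * {ffun D -> 'I_n} |
     (~~ odd #|q.1| == even) && standard_numbering q.2].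

Lemma signed_filling_entry q x (xD : x \in D) :
  odflt 0 (signed_filling q).[? x] = kth_entry q.1 (q.2 [` xD]).
Proof. by rewrite fnd_fmap_in. Qed.

Lemma card_neg_numbering (e : {set 'I_n}) g : standard_numbering g ->
  #|[pred x : D | kth_entry e (g x) < 0]| = #|e|.
Proof.
move=> g_std; rewrite -card_neg_kth_entry -(card_imset _ (standard_numbering_inj g_std)).
apply: eq_card => r; rewrite inE /=; apply/imsetP/idP => [[x xneg ->] //|rneg].
by have [x gx] := standard_numbering_onto r g_std; exists x; rewrite // inE /= gx.
Qed.

Hypotheses (la_part : is_partition la) (mu_part : is_partition mu)
           (la_mu : part_contains la mu) (m_gt0 : (0 < m)%N).

Section SignedFilling.
Variables (e : {set 'I_n}) (g : {ffun D -> 'I_n}).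
Hypothesis g_std : standard_numbering g.
Local Notation F x := (odflt 0 (signed_filling (e, g)).[? x]).

Lemma signed_filling_range x : x \in D -> F x \in signed_range n.
Proof.
by move=> xD; rewrite signed_filling_entry (signed_entries_range (kth_entry_mem _ _)).
Qed.

Lemma signed_filling_abs_inj x y : x \in D -> y \in D -> `|F x|%N = `|F y|%N -> x = y.
Proof.
move=> xD yD; rewrite !signed_filling_entry /=.
case/signed_entriesP: (kth_entry_mem e (ltn_ord (g [` xD]))) => k Ek.
case/signed_entriesP: (kth_entry_mem e (ltn_ord (g [` yD]))) => k' Ek'.
rewrite Ek Ek' !abs_signed_entry => -[] /val_inj kk'; subst k'.
have /kth_entry_inj : kth_entry e (g [` yD]) = kth_entry e (g [` xD]) by rewrite Ek' Ek.
move=> /(_ (ltn_ord _) (ltn_ord _)) /val_inj /(standard_numbering_inj g_std).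
by move=> /(congr1 val).
Qed.

Lemma signed_filling_increasing x y : x \in D -> y \in D ->
  box_before x y -> F x < F y.
Proof.
move=> xD yD xy; rewrite !signed_filling_entry /= kth_entry_ltE //.
exact: (standard_numbering_lt (x := [` xD]) (y := [` yD])).
Qed.

Lemma signed_filling_covers k : k \in signed_range n ->
  exists2 x, x \in D & F x = k \/ F x = - k.
Proof.
rewrite mem_signed_range => /andP[k0 kn].
pose j : 'I_n := inord `|k|.-1.
have jE : nat_of_ord j = `|k|.-1 by rewrite inordK //; lia.
have jS := signed_entry_mem e j.
have [x gx] := standard_numbering_onto (Ordinal (entry_rank_lt jS)) g_std.
exists (val x); first exact: fsvalP.
rewrite (signed_filling_entry _ (fsvalP x)) fsetsubE gx /= entry_rankK //.
have := abs_signed_entry e j; rewrite jE; lia.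
Qed.

Lemma signed_filling_neg_count :
  count (fun x => F x < 0) (enum_fset D) = #|e|.
Proof.
rewrite count_enum_fset -(card_neg_numbering e g_std); apply: eq_card => x.
by rewrite !inE (signed_filling_entry _ (fsvalP x)) fsetsubE.
Qed.

Lemma signed_filling_T even : ~~ odd #|e| = even ->
  T_set n la mu m even (signed_filling (e, g)).
Proof.
move=> e_even; split=> //.
have D_gt0 : (0 < #|` D|)%N by rewrite card_D.
have [r0 [r0_nonempty r0_last]] := exists_last_row D_gt0.
pose t := doubled_tableau la mu m r0 (signed_filling (e, g)).
have t_pos : pos_part_is t la mu (signed_filling (e, g)).
  exact: doubled_tableau_pos_part.
exists t; split=> //.
- apply: doubled_tableau_DYoung => //.
  + exact: signed_filling_range.
  + exact: signed_filling_abs_inj.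
  + exact: signed_filling_covers.
- apply: doubled_tableau_standard => //; exact: signed_filling_increasing.
- exact: doubled_tableau_smallest.
- by rewrite (neg_count_pos_part t_pos) signed_filling_neg_count.
Qed.

End SignedFilling.

Section FromTableau.
Variables (f : {fmap box -> int}) (t : filling).
Hypotheses (dom_f : domf f = D) (t_DYoung : is_DYoung n t) (t_std : is_standard t)
           (t_pos : pos_part_is t la mu f).
Local Notation F x := (odflt 0 f.[? x]).

Definition neg_set : {set 'I_n} :=
  [set k : 'I_n | [exists x : D, F (val x) == - Posz k.+1]].

Lemma pos_part_signed_entries (x : D) : F (val x) \in signed_entries neg_set.
Proof.
have := pos_part_range t_DYoung t_pos (valP x).
rewrite mem_signed_range => /andP[F0 Fn].
pose k : 'I_n := inord `|F (val x)|.-1.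
have kE : nat_of_ord k = `|F (val x)|.-1 by rewrite inordK //; lia.
case: (ltrP (F (val x)) 0) => Fsign.
  have -> : F (val x) = - Posz k.+1 by rewrite kE; lia.
  rewrite neg_signed_entries inE; apply/existsP; exists x; apply/eqP.
  by rewrite kE; lia.
have -> : F (val x) = Posz k.+1 by rewrite kE; lia.
rewrite pos_signed_entries inE; apply/negP => /existsP[y /eqP Fy].
by apply: (pos_part_not_opp t_DYoung t_pos (valP y) (valP x)); rewrite Fy kE; lia.
Qed.

Definition rank_numbering : {ffun D -> 'I_n} :=
  [ffun x => inord (entry_rank neg_set (F (val x)))].

Lemma kth_rank_numbering x : kth_entry neg_set (rank_numbering x) = F (val x).
Proof.
have Fx := pos_part_signed_entries x.
by rewrite ffunE inordK ?entry_rank_lt ?entry_rankK.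
Qed.

Lemma rank_numbering_standard : standard_numbering rank_numbering.
Proof.
apply: standard_numberingP => [x y gxy|x y xy].
  apply/val_inj/(pos_part_inj t_DYoung t_pos (valP x) (valP y)).
  by rewrite -!kth_rank_numbering gxy.
have := pos_part_increasing t_pos t_std (valP x) (valP y) xy.
by rewrite -!kth_rank_numbering kth_entry_ltE.
Qed.

Lemma signed_filling_rank : signed_filling (neg_set, rank_numbering) = f.
Proof.
apply: (fmap_eq_on (A := D)) => // x xD.
have xf : x \in domf f by rewrite dom_f.
by rewrite fnd_fmap_in /= kth_rank_numbering (fnd_odflt 0 xf).
Qed.

End FromTableau.

Lemma T_signed_filling even f : T_set n la mu m even f ->
  exists2 q, q \in signed_pairs even & signed_filling q = f.
Proof.
case=> dom_f [t [t_DYoung t_std _ t_pos t_even]].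
have g_std := rank_numbering_standard t_DYoung t_std t_pos.
have f_rank := signed_filling_rank dom_f t_DYoung t_pos.
exists (neg_set f, rank_numbering f) => //.
rewrite inE /= g_std andbT -t_even (neg_count_pos_part t_pos).
suff -> : count (fun x => odflt 0 f.[? x] < 0) (enum_fset D) = #|neg_set f| by [].
by rewrite -(signed_filling_neg_count _ g_std) f_rank.
Qed.

Lemma neg_set_of_numbering (e : {set 'I_n}) g : standard_numbering g ->
  e = [set k : 'I_n | [exists x : D, kth_entry e (g x) == - Posz k.+1]].
Proof.
move=> g_std; apply/setP => k; rewrite inE; apply/idP/existsP => [ke|[x /eqP gx]].
  have kS : - Posz k.+1 \in signed_entries e by rewrite neg_signed_entries.
  have [x gx] := standard_numbering_onto (Ordinal (entry_rank_lt kS)) g_std.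
  by exists x; rewrite gx /= entry_rankK.
by rewrite -(neg_signed_entries e) -gx kth_entry_mem.
Qed.

Lemma signed_filling_inj :
  {in [pred q | standard_numbering q.2] &, injective signed_filling}.
Proof.
move=> [e g] [e' g'] /= g_std g'_std E.
have Eg x : kth_entry e (g x) = kth_entry e' (g' x).
  have : (signed_filling (e, g)).[? val x] = (signed_filling (e', g')).[? val x].
    by rewrite E.
  by rewrite !fnd_fmap_val => -[].
have ee' : e = e'.
  rewrite (neg_set_of_numbering e g_std) (neg_set_of_numbering e' g'_std).
  by apply/setP => k; rewrite !inE; apply: eq_existsb => x; rewrite Eg.
subst e'; congr (_, _); apply/ffunP => x; apply/val_inj.
by apply: (kth_entry_inj (e := e)); rewrite ?ltn_ord ?Eg.
Qed.

Lemma card_T_set even : card_is (T_set n la mu m even) #|signed_pairs even|.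
Proof.
apply: card_is_image => [q q'|f].
  by rewrite !inE => /andP[_ q_std] /andP[_ q'_std]; apply: signed_filling_inj.
split; first exact: T_signed_filling.
by case=> -[e g]; rewrite inE /= => /andP[/eqP e_even g_std] <-; apply: signed_filling_T.
Qed.

End Counting.

Lemma card_subsets_parity n' even :
  #|[set e : {set 'I_n'.+1} | ~~ odd #|e| == even]| = (2 ^ n')%N.
Proof.
pose E b := [set e : {set 'I_n'.+1} | ~~ odd #|e| == b].
pose toggle (e : {set 'I_n'.+1}) := if ord0 \in e then e :\ ord0 else ord0 |: e.
have toggleK : involutive toggle.
  move=> e; rewrite /toggle; case: (boolP (ord0 \in e)) => e0.
    by rewrite in_setD1 eqxx /= setD1K.
  by rewrite setU11 setU1K.
have odd_toggle e : odd #|toggle e| = ~~ odd #|e|.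
  rewrite /toggle; case: ifP => e0; last by rewrite cardsU1 e0.
  by rewrite [in RHS](cardsD1 ord0) e0 /= negbK.
have E_toggle b : toggle @: E b = E (~~ b).
  apply/setP => e; rewrite !inE; apply/imsetP/idP => [[e' e'b ->]|eb].
    by move: e'b; rewrite inE odd_toggle; case: b; case: odd.
  by exists (toggle e); rewrite ?toggleK // inE odd_toggle; move: eb; case: b; case: odd.
have E_eq b : #|E (~~ b)| = #|E b|.
  by rewrite -E_toggle card_imset //; apply: can_inj toggleK.
have E_sum : (#|E true| + #|E false| = 2 ^ n'.+1)%N.
  have -> : E false = ~: E true by apply/setP => e; rewrite !inE; case: odd.
  by rewrite cardsC -cardsT -powersetT card_powerset cardsT card_ord.
have E_half : #|E true| = (2 ^ n')%N.
  by move: E_sum (E_eq true); rewrite expnS /=; lia.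
by case: even; [exact: E_half | rewrite -E_half -(E_eq true)].
Qed.

Lemma card_signed_pairs la mu n' even :
  #|signed_pairs la mu n' even| = (2 ^ n' * #|standard_numberings la mu n'|)%N.
Proof.
by rewrite -(card_subsets_parity n' even) -cardsX; apply: eq_card => -[e g]; rewrite !inE.
Qed.

Local Close Scope ring_scope.

Theorem proposition4p2 (la mu : seq nat) (n m : nat) :
  is_partition la -> is_partition mu -> part_contains la mu ->
  #|` skew_boxes la mu| = n -> (0 < n)%N -> (0 < m)%N ->
  exists f_la : nat,
    [/\ card_is (is_SYT n la mu) f_la,
        card_is (T_set n la mu m true) (2 ^ (n - 1) * f_la)%N &
        card_is (T_set n la mu m false) (2 ^ (n - 1) * f_la)%N].
Proof.
move=> la_part mu_part la_mu card_D n_gt0 m_gt0.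
case: n card_D n_gt0 => [//|n'] card_D _.
exists #|standard_numberings la mu n'|; rewrite subn1 /=.
rewrite -{1}(card_signed_pairs _ _ _ true) -(card_signed_pairs _ _ _ false).
by split; [exact: card_SYT | exact: card_T_set..].
Qed.
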